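(* Let $B,C\subset\mathbb{R}^d$ be closed convex sets with nonempty interiors and differentiable boundaries, with $B\cap C\neq\emptyset$. Let $x\in\partial B\cap\partial C$ be such that $n_B(x)\neq n_C(x)$, where $n_B(x),n_C(x)$ are the unit outer normals of $B$ and $C$ at $x$. Then there exist a point $a\in\operatorname{int}B\cap\{w:(w-x)\cdot n_C(x)>0\}$ and $\delta,s>0$ such that $$K\Big(x,\tfrac{a-x}{|a-x|},\delta,s\Big)\subset\operatorname{int}B\cup\{x\}\quad\text{and}\quad K\Big(x,-\tfrac{a-x}{|a-x|},\delta,s\Big)\subset\operatorname{int}C\cup\{x\}.$$
   Context: For $x_0,\xi\in\mathbb{R}^d$ with $|\xi|=1$, $\delta\in[0,2]$ and $s>0$: $K(x_0,\xi,\delta)=\{x\in\mathbb{R}^d\setminus\{x_0\}:\frac{x-x_0}{|x-x_0|}\cdot\xi\ge1-\delta\}\cup\{x_0\}$ and $K(x_0,\xi,\delta,s)=K(x_0,\xi,\delta)\cap B(x_0,s)$, where $B(x_0,s)$ is the open ball. *)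

From HB Require Import structures.
From mathcomp Require Import all_boot all_order all_algebra.
From mathcomp Require Import all_classical all_reals all_analysis.
Set Implicit Arguments. Unset Strict Implicit. Unset Printing Implicit Defensive.
Import Order.TTheory GRing.Theory Num.Theory.
Import numFieldNormedType.Exports.
Local Open Scope classical_set_scope.
Local Open Scope ring_scope.

Section Defs.
Context {R : realType} {d : nat}.
Notation V := 'rV[R]_d.

Definition dotv (u v : V) : R := \sum_(i < d) u ord0 i * v ord0 i.
Definition enorm (u : V) : R := Num.sqrt (dotv u u).

Definition bdry (B : set V) : set V := closure B `\` interior B.

Definition outer_normal (B : set V) (x n : V) : Prop :=
  enorm n = 1 /\ forall y, B y -> dotv (y - x) n <= 0.

(* differentiable (smooth) boundary of a convex body: at every boundary
   point the unit outer normal exists and is unique *)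
Definition smooth_boundary (B : set V) : Prop :=
  forall x, bdry B x -> exists! n, outer_normal B x n.

Definition eball (x0 : V) (s : R) : set V := [set x | enorm (x - x0) < s].

Definition cone (x0 xi : V) (delta : R) : set V :=
  [set x | x = x0 \/ (x <> x0 /\ dotv ((enorm (x - x0))^-1 *: (x - x0)) xi >= 1 - delta)].

Definition cone_s (x0 xi : V) (delta s : R) : set V :=
  cone x0 xi delta `&` eball x0 s.
End Defs.

(* The direction v := (nC - nB) / |nC - nB| satisfies v.nB < 0 < v.nC, so it suffices to
   show: if v.nB < 0 at a boundary point x of a closed convex body B with smooth boundary,
   then a thin cone around v near x lies in int B (apply this to B with v, to C with -v,
   and take a on the ray x + t v).  Otherwise there are non-interior points y -> x whose
   directions from x tend to v.  The segment from an interior point near x to such a y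
   leaves B at a boundary point z near x, and the outer normal n at z has n.(y - x) >= 0.
   By compactness these normals accumulate at an outer normal of B at x with nonnegative
   inner product with v; by smoothness it is nB, contradicting v.nB < 0. *)

From HB Require Import structures.
From mathcomp Require Import all_boot all_order all_algebra.
From mathcomp Require Import all_classical all_reals all_analysis.
From mathcomp Require Import ring lra.
Import Order.TTheory GRing.Theory Num.Theory.
Import numFieldNormedType.Exports.
Local Open Scope classical_set_scope.
Local Open Scope ring_scope.

Local Notation dir u := ((enorm u)^-1 *: u).

Lemma ler0_small {R : realFieldType} (a c : R) :
  (forall e, 0 < e -> a <= c * e) -> a <= 0.
Proof.
move=> small; apply/ler_addgt0Pr => e e0; rewrite add0r.
have c1_gt0 : 0 < `|c| + 1 by rewrite ltr_pwDr.
apply: le_trans (small _ (divr_gt0 e0 c1_gt0)) _.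
rewrite -[leRHS](divfK (lt0r_neq0 c1_gt0)) [leLHS]mulrC ler_pM2l ?divr_gt0 //.
by rewrite (le_trans (ler_norm c)) // lerDl.
Qed.

Lemma convex_comb {R : numDomainType} {M : lmodType R} [B : set M] [x b : M] t :
  convex_set B -> B x -> B b -> 0 <= t <= 1 -> B (t *: x + (1 - t) *: b).
Proof.
move=> cvxB Bx Bb /andP[t0 t1].
by have := cvxB x b (Itv01 t0 t1) (mem_set Bx) (mem_set Bb); rewrite inE.
Qed.

Section Euclidean.
Context {R : realType} {d : nat}.
Implicit Types (u v w x y p m n : 'rV[R]_d) (a : R).

Lemma dotvC u v : dotv u v = dotv v u.
Proof. by apply: eq_bigr => i _; rewrite mulrC. Qed.

Lemma dotvDl u w v : dotv (u + w) v = dotv u v + dotv w v.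
Proof. by rewrite /dotv -big_split; apply: eq_bigr => i _; rewrite mxE mulrDl. Qed.

Lemma dotvZl a u v : dotv (a *: u) v = a * dotv u v.
Proof. by rewrite /dotv mulr_sumr; apply: eq_bigr => i _; rewrite mxE mulrA. Qed.

Lemma dotvNl u v : dotv (- u) v = - dotv u v.
Proof. by rewrite -scaleN1r dotvZl mulN1r. Qed.

Lemma dotvBl u w v : dotv (u - w) v = dotv u v - dotv w v.
Proof. by rewrite dotvDl dotvNl. Qed.

Lemma dotvDr u w v : dotv v (u + w) = dotv v u + dotv v w.
Proof. by rewrite dotvC dotvDl !(dotvC v). Qed.

Lemma dotvZr a u v : dotv v (a *: u) = a * dotv v u.
Proof. by rewrite dotvC dotvZl dotvC. Qed.

Lemma dotvNr u v : dotv v (- u) = - dotv v u.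
Proof. by rewrite dotvC dotvNl dotvC. Qed.

Lemma dotvBr u w v : dotv v (u - w) = dotv v u - dotv v w.
Proof. by rewrite dotvDr dotvNr. Qed.

Lemma dotvv_ge0 u : 0 <= dotv u u.
Proof. by apply: sumr_ge0 => i _; rewrite -expr2 sqr_ge0. Qed.

Lemma dotvv_eq0 u : (dotv u u == 0) = (u == 0).
Proof.
apply/eqP/eqP => [uu0|->]; last by rewrite /dotv big1 // => i _; rewrite mxE mul0r.
apply/rowP => i; rewrite mxE; apply/eqP; rewrite -[_ == 0]orbb -mulf_eq0; apply/eqP.
by apply: (psumr_eq0P _ uu0) => // j _; rewrite -expr2 sqr_ge0.
Qed.

Lemma enorm_ge0 u : 0 <= enorm u.
Proof. exact: sqrtr_ge0. Qed.

Lemma enorm_sqr u : enorm u ^+ 2 = dotv u u.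
Proof. by rewrite sqr_sqrtr // dotvv_ge0. Qed.

Lemma enorm_eq0 u : (enorm u == 0) = (u == 0).
Proof. by rewrite -dotvv_eq0 -enorm_sqr sqrf_eq0. Qed.

Lemma enormZ a u : enorm (a *: u) = `|a| * enorm u.
Proof. by rewrite /enorm dotvZl dotvZr mulrA -expr2 sqrtrM ?sqr_ge0 // sqrtr_sqr. Qed.

Lemma enormN u : enorm (- u) = enorm u.
Proof. by rewrite -scaleN1r enormZ normrN normr1 mul1r. Qed.

Lemma enorm_distC u v : enorm (u - v) = enorm (v - u).
Proof. by rewrite -enormN opprB. Qed.

Lemma cauchy_schwarz u v : `|dotv u v| <= enorm u * enorm v.
Proof.
rewrite -(ler_pXn2r (_ : 0 < 2)%N) ?nnegrE ?mulr_ge0 ?enorm_ge0 //.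
rewrite real_normK ?num_real // exprMn !enorm_sqr.
set a := dotv v v; set b := dotv u v.
have [a0|a_neq0] := eqVneq a 0.
  have v0 : v = 0 by apply/eqP; rewrite -dotvv_eq0 -/a a0.
  have -> : b = 0 by rewrite /b v0 /dotv big1 // => i _; rewrite mxE mulr0.
  by rewrite expr0n /= mulr_ge0 ?dotvv_ge0.
have a_gt0 : 0 < a by rewrite lt_def a_neq0 dotvv_ge0.
have := dotvv_ge0 (a *: u - b *: v).
rewrite !(dotvBl, dotvBr, dotvZl, dotvZr) (dotvC v u) -/a -/b => h.
rewrite -subr_ge0 -(pmulr_rge0 _ a_gt0); nra.
Qed.

Lemma dotv_le u v : dotv u v <= enorm u * enorm v.
Proof. exact: le_trans (ler_norm _) (cauchy_schwarz _ _). Qed.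

Lemma ler_enormD u v : enorm (u + v) <= enorm u + enorm v.
Proof.
rewrite -(ler_pXn2r (_ : 0 < 2)%N) ?nnegrE ?addr_ge0 ?enorm_ge0 //.
rewrite enorm_sqr !(dotvDl, dotvDr) sqrrD !enorm_sqr (dotvC v u).
have := dotv_le u v; lra.
Qed.

Lemma ler_enorm_dist u v : `|enorm u - enorm v| <= enorm (u - v).
Proof.
have lerB w w' : enorm w - enorm w' <= enorm (w - w').
  by rewrite lerBlDr; apply: le_trans (ler_enormD _ _); rewrite subrK.
by rewrite ler_norml lerB andbT lerNl opprB enorm_distC lerB.
Qed.

Lemma enorm_dir [u] : u != 0 -> enorm (dir u) = 1.
Proof.
rewrite -enorm_eq0 => u0.
by rewrite enormZ ger0_norm ?invr_ge0 ?enorm_ge0 // mulVf.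
Qed.

Lemma dirZ t u : 0 < t -> enorm u = 1 -> dir (t *: u) = u.
Proof.
by move=> t0 u1; rewrite enormZ u1 mulr1 gtr0_norm // scalerA mulVf ?gt_eqF ?scale1r.
Qed.

Lemma enormB_unit_sqr u v : enorm u = 1 -> enorm v = 1 ->
  enorm (u - v) ^+ 2 = 2 - 2 * dotv u v.
Proof.
move=> u1 v1; rewrite enorm_sqr !(dotvBl, dotvBr) -!enorm_sqr u1 v1 (dotvC v u).
by rewrite expr1n; lra.
Qed.

Lemma enorm_segment_le_max x p y l : 0 <= l <= 1 ->
  enorm (p + l *: (y - p) - x) <= Num.max (enorm (p - x)) (enorm (y - x)).
Proof.
move=> /andP[l0 l1].
have -> : p + l *: (y - p) - x = (1 - l) *: (p - x) + l *: (y - x).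
  by apply/rowP => i; rewrite !mxE; ring.
apply: le_trans (ler_enormD _ _) _.
rewrite !enormZ !ger0_norm ?subr_ge0 //.
set M := Num.max _ _.
have : enorm (p - x) <= M by rewrite le_max lexx.
have : enorm (y - x) <= M by rewrite le_max lexx orbT.
nra.
Qed.

Lemma dotv_unit_near [n u v e] : enorm n = 1 -> enorm u = 1 -> enorm v = 1 ->
  0 <= e -> 1 - e ^+ 2 / 2 <= dotv u v -> dotv n u - e <= dotv n v.
Proof.
move=> n1 u1 v1 e0 uv.
have uv_le : enorm (u - v) <= e.
  rewrite -(ler_pXn2r (_ : 0 < 2)%N) ?nnegrE ?enorm_ge0 //.
  by rewrite enormB_unit_sqr //; lra.
have := dotv_le n (u - v); rewrite dotvBr n1 mul1r; lra.
Qed.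

Lemma dotv_dir_subr [m n] : enorm m = 1 -> enorm n = 1 -> m != n ->
  dotv (dir (n - m)) m < 0 /\ 0 < dotv (dir (n - m)) n.
Proof.
move=> m1 n1 mn; have nm0 : n - m != 0 by rewrite subr_eq0 eq_sym.
have enorm_nm_gt0 : 0 < enorm (n - m) by rewrite lt_def enorm_eq0 nm0 enorm_ge0.
have : 0 < enorm (n - m) ^+ 2 by rewrite exprn_gt0.
rewrite enormB_unit_sqr // => nm_gt0.
rewrite !dotvZl !dotvBl -!enorm_sqr m1 n1 (dotvC m n) expr1n.
by rewrite pmulr_rlt0 ?pmulr_rgt0 ?invr_gt0 //; split; lra.
Qed.

End Euclidean.

Section EuclideanTopology.
Context {R : realType} {d : nat}.
Implicit Types (u p : 'rV[R]_d) (A : set 'rV[R]_d).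

Lemma normr_le_enorm u : `|u| <= enorm u.
Proof.
rewrite [leLHS]/Num.Def.normr /= mx_normrE; apply/bigmax_leP; split => /=.
  exact: enorm_ge0.
move=> [i j] _ /=; rewrite (ord1 i) -sqrtr_sqr ler_sqrt ?dotvv_ge0 //.
rewrite /dotv (bigD1 j) //= expr2 lerDl.
by apply: sumr_ge0 => k _; rewrite -expr2 sqr_ge0.
Qed.

Lemma enorm_le_normr u : enorm u <= (d%:R + 1) * `|u|.
Proof.
rewrite -(ler_pXn2r (_ : 0 < 2)%N) ?nnegrE ?enorm_ge0 ?mulr_ge0 ?addr_ge0 //.
rewrite enorm_sqr /dotv.
apply: (@le_trans _ _ (\sum_(i < d) `|u| ^+ 2)).
  apply: ler_sum => i _; rewrite -expr2 -real_normK ?num_real //.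
  rewrite lerXn2r ?nnegrE //.
  rewrite [leRHS]/Num.Def.normr /= mx_normrE; apply/bigmax_geP; right.
  by exists (ord0, i).
rewrite sumr_const card_ord exprMn -mulr_natl.
have := sqr_ge0 `|u|; have : 0 <= (d%:R : R) by []; nra.
Qed.

Lemma nbhs_eballP p A : nbhs p A <-> exists2 r, 0 < r & eball p r `<=` A.
Proof.
have d1_gt0 : 0 < d%:R + 1 :> R by rewrite ltr_wpDl.
split.
  move=> /nbhs_ballP [e e0 pA]; exists e => // y ype; apply: pA.
  rewrite -ball_normE /ball_ /= -normrN opprB.
  exact: le_lt_trans (normr_le_enorm _) ype.
move=> [r r0 pA]; apply/nbhs_ballP; exists (r / (d%:R + 1)).
  by rewrite /= divr_gt0.
move=> y; rewrite -ball_normE /ball_ /= -normrN opprB => ype; apply: pA.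
apply: le_lt_trans (enorm_le_normr _) _.
by rewrite mulrC -ltr_pdivlMr.
Qed.

Lemma cluster_nested_unit_ball (A : R -> set 'rV[R]_d) :
  (forall e, 0 < e -> A e !=set0) ->
  (forall e e', 0 < e <= e' -> A e `<=` A e') ->
  A 1 `<=` [set n | enorm n <= 1] ->
  exists ns, forall e, 0 < e -> exists2 n, A e n & enorm (n - ns) < e.
Proof.
move=> A_neq0 A_mono A1.
set F := filter_from [set e : R | 0 < e] A.
have FF : ProperFilter F.
  apply: filter_from_proper => //; apply: filter_from_filter.
    by exists 1; rewrite /= ltr01.
  move=> e e' e0 e'0; exists (Num.min e e'); first by rewrite /= lt_min e0.
  by move=> n An; split; apply: A_mono An; rewrite lt_min e0 e'0 ge_min lexx ?orbT.
have ball1E : closed_ball (0 : 'rV[R]_d) 1 = [set n | `|n| <= 1].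
  by rewrite closed_ballE //; apply/seteqP; split => n; rewrite /closed_ball_ /= sub0r normrN.
have cK : compact (closed_ball (0 : 'rV[R]_d) 1).
  apply: bounded_closed_compact; last exact: closed_ball_closed.
  rewrite ball1E; exists 1; split; first exact: num_real.
  by move=> M M1 n /= n1; apply: le_trans n1 (ltW M1).
have FK : F (closed_ball 0 1).
  by exists 1 => //= n /A1 n1; rewrite ball1E /= (le_trans (normr_le_enorm _)).
have [ns [_ cl]] := cK F FF FK.
exists ns => e e0.
have FAe : F (A e) by exists e.
have ns_eball : nbhs ns (eball ns e) by apply/nbhs_eballP; exists e.
by have [n [Aen nse]] := cl _ _ FAe ns_eball; exists n.
Qed.

End EuclideanTopology.

Section Convex.
Context {R : realType} {d : nat}.
Implicit Types (B : set 'rV[R]_d) (x p b : 'rV[R]_d).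

Lemma interior_convex_comb B p b t : convex_set B -> interior B p -> B b ->
  0 < t <= 1 -> interior B (t *: p + (1 - t) *: b).
Proof.
move=> cvxB /nbhs_eballP[r r0 pB] Bb /andP[t0 t1]; apply/nbhs_eballP.
exists (t * r); first exact: mulr_gt0.
move=> y; set q := t *: p + (1 - t) *: b => yq.
have Bp' : B (p + t^-1 *: (y - q)).
  apply: pB; rewrite /eball /= addrAC subrr add0r enormZ gtr0_norm ?invr_gt0 //.
  by rewrite mulrC ltr_pdivrMr // mulrC.
have := convex_comb t cvxB Bp' Bb; rewrite ltW // t1 => /(_ isT).
rewrite scalerDr scalerA mulfV ?gt_eqF // scale1r /q.
by rewrite opprD !addrA subrK (addrC (t *: p) y) addrK.
Qed.

Lemma convex_subset_closure_interior [B] : convex_set B -> interior B !=set0 ->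
  B `<=` closure (interior B).
Proof.
move=> cvxB [p0 ip0] x Bx N /nbhs_eballP[r r0 xN].
set E := enorm (p0 - x).
have E1_gt0 : 0 < E + 1 by rewrite ltr_wpDl ?enorm_ge0.
set t := Num.min 1 (r / (E + 1)).
have t0 : 0 < t by rewrite lt_min ltr01 divr_gt0.
exists (t *: p0 + (1 - t) *: x); split.
  by apply: interior_convex_comb; rewrite ?t0 ?ge_min ?lexx.
apply: xN; rewrite /eball /= scalerBl scale1r addrA addrAC addrK -scalerBr.
rewrite enormZ gtr0_norm // -/E.
have : t <= r / (E + 1) by rewrite ge_min lexx orbT.
rewrite ler_pdivlMr // => tr.
have := enorm_ge0 (p0 - x); rewrite -/E; nra.
Qed.

End Convex.

Section OuterNormal.
Context {R : realType} {d : nat}.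
Implicit Types (B : set 'rV[R]_d) (x y z p n v : 'rV[R]_d).

Lemma bdry_segment [B p y] : closed B -> interior B p -> ~ interior B y ->
  exists2 l, 0 < l <= 1 & bdry B (p + l *: (y - p)).
Proof.
move=> cB ip niy; set g := fun l : R => p + l *: (y - p).
have gC : continuous g.
  by move=> l; apply: cvgD; [exact: cvg_cst | exact: scalel_continuous].
set S := `[0, 1] `&` g @^-1` B.
have S0 : S 0.
  split; first by rewrite /= in_itv /= lexx ler01.
  by rewrite /g /= scale0r addr0; exact: nbhs_singleton.
have S_sup : has_sup S.
  by split; [exists 0 | exists 1 => l [/= + _]; rewrite in_itv => /andP[]].
set ls := sup S.
have [+ Bgls] : S ls.
  have cS : closed S.
    by apply: closedI; [exact: itv_closed | exact: (continuous_closedP g).1].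
  by rewrite (closure_id S).1 //; apply: closure_sup; case: S_sup.
rewrite /= in_itv /= => /andP[ls0 ls1].
have nigls : ~ interior B (g ls).
  move=> igls; have [ls_eq1|ls_neq1] := eqVneq ls 1.
    by apply: niy; rewrite -[y](addrNK p) addrC -[y - p]scale1r -ls_eq1.
  have : \forall l \near ls^'+, [/\ ls < l, l <= 1 & B (g l)].
    near=> l; split.
    - by near: l; exact: nbhs_right_gt.
    - by near: l; apply: nbhs_right_le; rewrite lt_neqAle ls_neq1 ls1.
    - by near: l; apply: cvg_within; exact: gC _ _ igls.
  move=> /filter_ex[l [lsl l1 Bgl]].
  suff : l <= ls by rewrite leNgt lsl.
  apply: sup_upper_bound => //; split => //=.
  by rewrite in_itv /= l1 (le_trans ls0) // ltW.
exists ls; last by split => //; exact: subset_closure.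
rewrite ls1 andbT lt_neqAle ls0 andbT; apply: contra_notN nigls => /eqP ls00.
by rewrite /g -ls00 scale0r addr0.
Unshelve. all: by end_near.
Qed.

Lemma outer_normal_segment B x p y l n : B x -> B p -> 0 < l <= 1 ->
  outer_normal B (p + l *: (y - p)) n -> 0 <= dotv (y - x) n.
Proof.
move=> Bx Bp /andP[l0 l1] [_ normal_n]; set z := p + l *: (y - p).
have yp : 0 <= dotv (y - p) n.
  have := normal_n p Bp; rewrite /z opprD addrA subrr add0r dotvNl dotvZl.
  by rewrite oppr_le0 pmulr_rge0.
have yx : y - x = (1 - l) *: (y - p) - (x - z).
  by apply/rowP => i; rewrite /z !mxE; ring.
rewrite yx dotvBl dotvZl subr_ge0 (le_trans (normal_n x Bx)) //.
by rewrite mulr_ge0 // subr_ge0.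
Qed.

Lemma exterior_outer_normal [B x p y] : closed B -> smooth_boundary B -> B x ->
  interior B p -> ~ interior B y ->
  exists z n, [/\ enorm (z - x) <= Num.max (enorm (p - x)) (enorm (y - x)),
    outer_normal B z n & 0 <= dotv (y - x) n].
Proof.
move=> cB smoothB Bx ip niy.
have [l /andP[l0 l1] bz] := bdry_segment cB ip niy.
have [n [normal_n _]] := smoothB _ bz.
exists (p + l *: (y - p)), n; split => //.
- by apply: enorm_segment_le_max; rewrite ltW.
- by apply: outer_normal_segment normal_n => //; [exact: nbhs_singleton | rewrite l0].
Qed.

Lemma outer_normal_limit B x v :
  (forall e, 0 < e -> exists z n,
     [/\ enorm (z - x) < e, outer_normal B z n & - e <= dotv n v]) ->
  exists ns, outer_normal B x ns /\ 0 <= dotv ns v.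
Proof.
move=> approx.
set A := fun e => [set n | exists z,
  [/\ enorm (z - x) < e, outer_normal B z n & - e <= dotv n v]].
have [ns near_ns] : exists ns, forall e, 0 < e -> exists2 n, A e n & enorm (n - ns) < e.
  apply: cluster_nested_unit_ball.
  - by move=> e e0; have [z [n zn]] := approx e e0; exists n, z.
  - move=> e e' /andP[_ ee'] n [z [zx normal_n nv]]; exists z; split => //.
      exact: lt_le_trans ee'.
    by apply: le_trans nv; rewrite lerN2.
  - by move=> n [z [_ [n1 _] _]]; rewrite /= n1.
exists ns; split; first split.
- apply/eqP; rewrite -subr_eq0 -normr_le0; apply: (@ler0_small _ _ 1) => e e0.
  have [n [z [_ [n1 _] _]] nns] := near_ns e e0.
  by rewrite mul1r -n1 (le_trans (ler_enorm_dist _ _)) // enorm_distC ltW.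
- move=> b Bb; apply: (@ler0_small _ _ (1 + enorm (b - x))) => e e0.
  have [n [z [zx [n1 normal_n] _]] nns] := near_ns e e0.
  have -> : dotv (b - x) ns =
      dotv (b - z) n + dotv (z - x) n + dotv (b - x) (ns - n).
    by rewrite -dotvDl addrA subrK -dotvDr [n + _]addrC subrK.
  have := normal_n b Bb.
  have : dotv (z - x) n <= e by rewrite (le_trans (dotv_le _ _)) // n1 mulr1 ltW.
  have : dotv (b - x) (ns - n) <= enorm (b - x) * e.
    by rewrite (le_trans (dotv_le _ _)) // ler_wpM2l ?enorm_ge0 // enorm_distC ltW.
  lra.
- rewrite -oppr_le0; apply: (@ler0_small _ _ (1 + enorm v)) => e e0.
  have [n [z [_ _ nv]] nns] := near_ns e e0.
  have : dotv (n - ns) v <= e * enorm v.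
    by rewrite (le_trans (dotv_le _ _)) // ler_wpM2r ?enorm_ge0 // ltW.
  rewrite dotvBl; lra.
Qed.

End OuterNormal.

Section Cone.
Context {R : realType} {d : nat}.
Implicit Types (B : set 'rV[R]_d) (x v : 'rV[R]_d).

Lemma le_cone_s x v delta delta' s s' : delta <= delta' -> s <= s' ->
  cone_s x v delta s `<=` cone_s x v delta' s'.
Proof.
move=> dd' ss' y [[->|[yx yv]] ys]; split; [by left | | | ].
- exact: lt_le_trans ys ss'.
- by right; split => //; apply: le_trans yv; rewrite lerD2l lerN2.
- exact: lt_le_trans ys ss'.
Qed.

Lemma cone_s_ray_interior B x v delta s t : enorm v = 1 -> 0 <= delta ->
  0 < t < s -> cone_s x v delta s `<=` interior B `|` [set x] ->
  interior B (t *: v + x).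
Proof.
move=> v1 d0 /andP[t0 ts] cone_sub.
have tvx : t *: v + x - x = t *: v by rewrite addrK.
have tv0 : t *: v != 0 by rewrite scaler_eq0 gt_eqF //= -enorm_eq0 v1 oner_eq0.
have [] // := cone_sub (t *: v + x).
  split; last by rewrite /eball /= tvx enormZ v1 mulr1 gtr0_norm.
  right; split; first by move=> tvx_x; move: tv0; rewrite -tvx tvx_x subrr eqxx.
  by rewrite tvx dirZ // -enorm_sqr v1 expr1n lerBlDr lerDl.
by move=> /= tvx_x; move: tv0; rewrite -tvx tvx_x subrr eqxx.
Qed.

Lemma interior_cone [B x nB v] : closed B -> convex_set B -> interior B !=set0 ->
  smooth_boundary B -> bdry B x -> outer_normal B x nB ->
  enorm v = 1 -> dotv v nB < 0 ->
  exists delta s, [/\ 0 < delta, 0 < s & cone_s x v delta s `<=` interior B `|` [set x]].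
Proof.
move=> cB cvxB iB smoothB bx normal_nB v1 vnB.
have Bx : B x by rewrite (closure_id B).1 //; case: bx.
apply: contrapT => no_cone.
have exterior_near e : 0 < e -> exists y, [/\ y <> x, enorm (y - x) < e,
    1 - e ^+ 2 / 2 <= dotv (dir (y - x)) v & ~ interior B y].
  move=> e0; apply: contrapT => none; apply: no_cone.
  exists (e ^+ 2 / 2), e; split => //; first by rewrite divr_gt0 ?exprn_gt0.
  move=> y [[->|[yx yv]] ys]; [by right | left].
  by apply: contrapT => niy; apply: none; exists y.
have [ns [normal_ns nsv]] : exists ns, outer_normal B x ns /\ 0 <= dotv ns v.
  apply: outer_normal_limit => e e0.
  have [y [yx ys yv niy]] := exterior_near e e0.
  have x_eball : nbhs x (eball x e) by apply/nbhs_eballP; exists e.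
  have [p [ip px]] := convex_subset_closure_interior cvxB iB _ Bx _ x_eball.
  have [z [n [zx normal_n yxn]]] := exterior_outer_normal cB smoothB Bx ip niy.
  exists z, n; split => //; first by apply: le_lt_trans zx _; rewrite gt_max px ys.
  have yx0 : y - x != 0 by rewrite subr_eq0; apply/eqP.
  case: normal_n => n1 _.
  apply: le_trans _ (dotv_unit_near n1 (enorm_dir yx0) v1 (ltW e0) yv).
  by rewrite -[leLHS]add0r lerD2r dotvZr mulr_ge0 ?invr_ge0 ?enorm_ge0 // dotvC.
have [n0 [_ uniq_normal]] := smoothB x bx.
have ns_nB : ns = nB by rewrite -(uniq_normal _ normal_ns) (uniq_normal _ normal_nB).
by move: nsv; rewrite ns_nB dotvC; lra.
Qed.

End Cone.

Theorem lemma2p16 (R : realType) (d : nat) (B C : set 'rV[R]_d) (x nB nC : 'rV[R]_d) :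
  closed B -> convex_set B -> interior B !=set0 -> smooth_boundary B ->
  closed C -> convex_set C -> interior C !=set0 -> smooth_boundary C ->
  B `&` C !=set0 ->
  bdry B x -> bdry C x ->
  outer_normal B x nB -> outer_normal C x nC -> nB <> nC ->
  exists a : 'rV[R]_d,
    interior B a /\ dotv (a - x) nC > 0 /\
    exists delta s : R, 0 < delta /\ delta <= 2 /\ 0 < s /\
      cone_s x ((enorm (a - x))^-1 *: (a - x)) delta s `<=` interior B `|` [set x] /\
      cone_s x (- ((enorm (a - x))^-1 *: (a - x))) delta s `<=` interior C `|` [set x].
Proof.
move=> cB cvxB iB smoothB cC cvxC iC smoothC _ bxB bxC normal_nB normal_nC nBC.
have [[nB1 _] [nC1 _]] := (normal_nB, normal_nC).
have nCB0 : nC - nB != 0 by rewrite subr_eq0; apply/eqP => /esym.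
set v := dir (nC - nB); have v1 : enorm v = 1 := enorm_dir nCB0.
have [vnB vnC] := dotv_dir_subr nB1 nC1 (introN eqP nBC).
have [dB [sB [dB_gt0 sB_gt0 coneB]]] := interior_cone cB cvxB iB smoothB bxB normal_nB v1 vnB.
have Nv1 : enorm (- v) = 1 by rewrite enormN.
have NvnC : dotv (- v) nC < 0 by rewrite dotvNl oppr_lt0.
have [dC [sC [dC_gt0 sC_gt0 coneC]]] := interior_cone cC cvxC iC smoothC bxC normal_nC Nv1 NvnC.
have t_gt0 : 0 < sB / 2 by rewrite divr_gt0.
exists (sB / 2 *: v + x); rewrite addrK dirZ //; split; last split.
- by apply: cone_s_ray_interior v1 (ltW dB_gt0) _ coneB; rewrite t_gt0; lra.
- by rewrite dotvZl mulr_gt0.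
exists (Num.min dB (Num.min dC 2)), (Num.min sB sC); split; [|split; [|split]].
- by rewrite !lt_min dB_gt0 dC_gt0 ltr0n.
- by rewrite !ge_min lexx !orbT.
- by rewrite lt_min sB_gt0.
split; [apply: subset_trans coneB | apply: subset_trans coneC];
  by apply: le_cone_s; rewrite !ge_min lexx ?orbT.
Qed.
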